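(* Let $0\le\gamma<1$ and $\beta>0$, and let $f\in\mathcal{B}(\Omega_\gamma)$ have the expansion $f(z)=\sum_{n=0}^\infty a_n\left(z+\frac{\gamma}{1-\gamma}\right)^n$ in $\Omega_\gamma$. Then $$\sum_{n=0}^\infty \frac{|a_n|}{(n+\beta)(1-\gamma)^n}\rho^n\le\frac{1}{\beta}\qquad\text{for all }\rho\in[0,\rho_1],$$ where $\rho_1=\rho_1(\beta)$ is the unique root in $(0,1)$ of the equation $$\frac{1}{\beta}-2\sum_{n=1}^\infty\frac{\rho^n}{n+\beta}=0.$$ The number $\rho_1$ is best possible: for every $\rho\in(\rho_1,1)$ there exists $f\in\mathcal{B}(\Omega_\gamma)$ for which the left-hand side exceeds $1/\beta$.
   Context: For $\gamma\in[0,1)$, $\Omega_\gamma=\left\{z\in\mathbb{C}:\left|z+\frac{\gamma}{1-\gamma}\right|<\frac{1}{1-\gamma}\right\}$, the open disk with center $-\frac{\gamma}{1-\gamma}$ and radius $\frac{1}{1-\gamma}$. It contains the unit disk $\mathbb{D}$. The class $\mathcal{B}(\Omega_\gamma)$ consists of all analytic functions $f$ on $\Omega_\gamma$ with $|f|\le 1$ on $\Omega_\gamma$. The parameter $\rho\in[0,1)$ plays the role of $|\gamma+(1-\gamma)z|$ for $z\in\Omega_\gamma$. *)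

From Stdlib Require Import Reals.
From Coquelicot Require Import Coquelicot.
Open Scope R_scope.

Definition Omega_center (g : R) : C := RtoC (- (g / (1 - g))).
Definition Omega_radius (g : R) : R := / (1 - g).

Definition in_Omega (g : R) (z : C) : Prop :=
  Cmod (Cminus z (Omega_center g)) < Omega_radius g.

Definition has_expansion (g : R) (f : C -> C) (a : nat -> C) : Prop :=
  forall z, in_Omega g z ->
    is_series (fun n => Cmult (a n) (Cpow (Cminus z (Omega_center g)) n)) (f z).

(* f in B(Omega_gamma): analytic (given by the expansion) with |f| <= 1 *)
Definition in_B (g : R) (f : C -> C) : Prop :=
  forall z, in_Omega g z -> Cmod (f z) <= 1.

Definition bohr_term (g beta rho : R) (a : nat -> C) (n : nat) : R :=
  Cmod (a n) / ((INR n + beta) * (1 - g) ^ n) * rho ^ n.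

Definition rho1_eq (beta rho : R) : R :=
  / beta - 2 * Series (fun n => rho ^ (S n) / (INR (S n) + beta)).

(* Rescaling by [w = (1 - gamma) (z + gamma / (1 - gamma))] maps [Omega_gamma] onto the unit disk
   and turns the sum into [sum_n |b_n| rho^n / (n + beta)] for a function [sum_n b_n w^n] bounded by
   1 on the disk. Wiener's inequality [|b_n| <= 1 - |b_0|^2] for [n >= 1] bounds it by
   [|b_0| / beta + (1 - |b_0|^2) S(rho)] with [S(rho) = sum_(n>=1) rho^n / (n + beta)], which is
   at most [1 / beta] as soon as [S(rho) <= 1 / (2 beta)]; [S] is continuous, increasing and
   unbounded on [[0, 1)], so this means [rho <= rho_1]. Wiener's inequality is obtained without
   integration: Bessel's inequality for a truncation of [(x + y w^n) f(w)] sampled at roots of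
   unity on [|w| = r] gives a quadratic inequality in [x, y] whose optimization yields it. The
   Mobius maps [(a - w) / (1 - a w)] with [a -> 1] show that [rho_1] cannot be improved. *)

From Stdlib Require Import Reals Lra Lia Psatz.
From Coquelicot Require Import Coquelicot.
Open Scope R_scope.

Lemma Series_nonneg (a : nat -> R) : (forall n, 0 <= a n) -> ex_series a -> 0 <= Series a.
Proof.
  intros Ha Hex. rewrite <- (Rmult_0_l (Series a)), <- Series_scal_l.
  apply Series_le; [intros n; split; [lra | rewrite Rmult_0_l; apply Ha] | exact Hex].
Qed.

Lemma sum_f_R0_le_Series (a : nat -> R) (N : nat) :
  (forall n, 0 <= a n) -> ex_series a -> sum_f_R0 a N <= Series a.
Proof.
  intros Ha Hex. rewrite (Series_incr_n a (S N)) by (lia || exact Hex). simpl pred.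
  assert (0 <= Series (fun k => a (S N + k)%nat)).
  { apply Series_nonneg; [intros; apply Ha | now apply ex_series_incr_n]. }
  lra.
Qed.

Lemma lt_sum_f_R0_of_lt_Series (a : nat -> R) (L : R) :
  ex_series a -> L < Series a -> exists N, L < sum_f_R0 a N.
Proof.
  intros Hex HL. assert (Hlim := Series_correct a Hex). apply is_lim_seq_Reals in Hlim.
  destruct (Hlim (Series a - L)) as [N HN]; [lra|].
  exists N. specialize (HN N (le_n N)). unfold Rdist in HN. rewrite sum_n_Reals in HN.
  apply Rabs_def2 in HN. lra.
Qed.

Lemma Bernoulli_ineq (d : R) (n : nat) : 0 <= d <= 1 -> 1 - INR n * d <= (1 - d) ^ n.
Proof.
  intros Hd. induction n as [|n IH]; [simpl; lra|].
  rewrite S_INR. simpl.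
  assert (0 <= INR n) by apply pos_INR.
  assert (0 <= (1 - d) ^ n) by (apply pow_le; lra).
  nra.
Qed.

Lemma pow_decr_le_1 (x : R) (m n : nat) : 0 <= x <= 1 -> (m <= n)%nat -> x ^ n <= x ^ m.
Proof.
  intros Hx Hmn. induction Hmn as [|n _ IH]; [lra|].
  simpl. assert (0 <= x ^ n) by (apply pow_le; lra). nra.
Qed.

Lemma continuity_pt_lt (h : R -> R) (x L : R) : continuity_pt h x -> L < h x ->
  exists d, 0 < d /\ forall y, Rabs (y - x) < d -> L < h y.
Proof.
  intros Hc HL. destruct (Hc (h x - L)) as [d [Hd Hball]]; [lra|].
  exists d. split; [exact Hd|]. intros y Hy.
  destruct (Req_dec x y) as [<-|Hne]; [exact HL|].
  specialize (Hball y (conj (conj I Hne) Hy)).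
  simpl in Hball; unfold R_dist in Hball. apply Rabs_def2 in Hball. lra.
Qed.

Lemma continuity_pt_lt_below_1 (h : R -> R) (L : R) : continuity_pt h 1 -> L < h 1 ->
  exists r, 0 <= r < 1 /\ L < h r.
Proof.
  intros Hc HL. destruct (continuity_pt_lt h 1 L Hc HL) as [d [Hd Hnear]].
  exists (Rmax 0 (1 - d / 2)).
  assert (0 <= Rmax 0 (1 - d / 2) < 1 /\ Rabs (Rmax 0 (1 - d / 2) - 1) < d) as [Hr Hdist]
    by (unfold Rmax; destruct (Rle_dec 0 (1 - d / 2)); rewrite Rabs_left; lra).
  split; [exact Hr | exact (Hnear _ Hdist)].
Qed.

Lemma continuity_pt_le_at_1 (h : R -> R) (L : R) : continuity_pt h 1 ->
  (forall r, 0 <= r < 1 -> h r <= L) -> h 1 <= L.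
Proof.
  intros Hc Hle. apply Rnot_lt_le. intros HL.
  destruct (continuity_pt_lt_below_1 h L Hc HL) as [r [Hr HLr]].
  specialize (Hle r Hr). lra.
Qed.

Definition tail_term (beta rho : R) (n : nat) : R := rho ^ S n / (INR (S n) + beta).
Definition tail_sum (beta rho : R) : R := Series (tail_term beta rho).

Lemma rho1_eq_tail_sum (beta rho : R) : rho1_eq beta rho = / beta - 2 * tail_sum beta rho.
Proof. reflexivity. Qed.

Section TailSum.
Variable beta : R.
Hypothesis beta_gt0 : 0 < beta.

Lemma shifted_index_ge_1 (n : nat) : 1 <= INR (S n) + beta.
Proof. rewrite S_INR. pose proof (pos_INR n). lra. Qed.

Lemma tail_term_ge0 (rho : R) (n : nat) : 0 <= rho -> 0 <= tail_term beta rho n.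
Proof.
  intros Hrho. apply Rdiv_le_0_compat; [now apply pow_le|].
  pose proof (shifted_index_ge_1 n). lra.
Qed.

Lemma Rabs_tail_term_le (rho : R) (n : nat) :
  Rabs rho <= 1 -> Rabs (tail_term beta rho n) <= Rabs rho ^ n.
Proof.
  intros Hrho. pose proof (shifted_index_ge_1 n) as Hn.
  unfold tail_term. rewrite Rabs_div, (Rabs_right (INR (S n) + beta)), <- RPow_abs by lra.
  assert (0 <= Rabs rho ^ S n) by (apply pow_le, Rabs_pos).
  assert (Rabs rho ^ S n <= Rabs rho ^ n)
    by (apply pow_decr_le_1; [split; [apply Rabs_pos|] |]; lia || lra).
  apply Rle_trans with (Rabs rho ^ S n); [|lra].
  apply Rmult_le_reg_r with (INR (S n) + beta); [lra|].
  unfold Rdiv. rewrite Rmult_assoc, Rinv_l by lra. nra.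
Qed.

Lemma ex_series_tail_term (rho : R) : Rabs rho < 1 -> ex_series (tail_term beta rho).
Proof.
  intros Hrho. apply (@ex_series_le R_AbsRing R_CompleteNormedModule _ (fun n => Rabs rho ^ n)).
  - intros n. apply Rabs_tail_term_le. lra.
  - apply ex_series_geom. now rewrite Rabs_Rabsolu.
Qed.

Lemma tail_sum_PSeries (rho : R) :
  tail_sum beta rho = rho * PSeries (fun n => / (INR (S n) + beta)) rho.
Proof.
  unfold tail_sum, PSeries. rewrite <- Series_scal_l. apply Series_ext. intros n.
  unfold tail_term. rewrite <- tech_pow_Rmult. field. pose proof (shifted_index_ge_1 n). lra.
Qed.

Lemma tail_sum_0 : tail_sum beta 0 = 0.
Proof. rewrite tail_sum_PSeries. ring. Qed.

Lemma continuity_pt_tail_sum (rho : R) : Rabs rho < 1 -> continuity_pt (tail_sum beta) rho.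
Proof.
  intros Hrho.
  assert (Hrad : Rbar_le 1 (CV_radius (fun n => / (INR (S n) + beta)))).
  { apply (proj1 (CV_radius_bounded _)). exists 1. intros n.
    pose proof (shifted_index_ge_1 n).
    rewrite pow1, Rmult_1_r, Rabs_right by (apply Rle_ge, Rlt_le, Rinv_0_lt_compat; lra).
    rewrite <- Rinv_1. apply Rinv_le_contravar; lra. }
  apply (continuity_pt_ext (fun x => x * PSeries (fun n => / (INR (S n) + beta)) x)).
  { intros x. symmetry. apply tail_sum_PSeries. }
  apply continuity_pt_mult; [apply continuity_pt_id|].
  apply PSeries_continuity. eapply Rbar_lt_le_trans; [|exact Hrad]. exact Hrho.
Qed.

Lemma tail_sum_lt (x y : R) : 0 <= x -> x < y -> y < 1 -> tail_sum beta x < tail_sum beta y.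
Proof.
  intros Hx Hxy Hy.
  assert (Ex := ex_series_tail_term x ltac:(rewrite Rabs_right; lra)).
  assert (Ey := ex_series_tail_term y ltac:(rewrite Rabs_right; lra)).
  set (d := fun n => tail_term beta y n - tail_term beta x n).
  assert (Ed : ex_series d) by (apply (@ex_series_minus R_AbsRing R_NormedModule); assumption).
  assert (Hd : forall n, 0 <= d n).
  { intros n. unfold d, tail_term, Rdiv. rewrite <- Rmult_minus_distr_r.
    pose proof (shifted_index_ge_1 n).
    apply Rmult_le_pos; [|left; apply Rinv_0_lt_compat; lra].
    assert (x ^ S n <= y ^ S n) by (apply pow_incr; lra). lra. }
  assert (Hd0 : 0 < d 0%nat).
  { unfold d, tail_term, Rdiv. rewrite <- Rmult_minus_distr_r, !pow_1.
    apply Rmult_lt_0_compat; [lra|]. apply Rinv_0_lt_compat.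
    pose proof (shifted_index_ge_1 0). lra. }
  assert (0 <= Series (fun k => d (S k)))
    by (apply Series_nonneg; [intros; apply Hd | now apply (ex_series_incr_1 d)]).
  assert (Hsplit := Series_incr_1 d Ed).
  unfold d in Hsplit at 1. rewrite Series_minus in Hsplit by assumption.
  unfold tail_sum. lra.
Qed.

Lemma harmonic_ge_ln (N : nat) : ln (INR N + 2) <= sum_f_R0 (fun n => / (INR n + 1)) N.
Proof.
  assert (Hln : forall x, 0 < x -> ln (1 + x) < x).
  { intros x Hx. rewrite <- (ln_exp x) at 2. apply ln_increasing; [lra|]. apply exp_ineq1. lra. }
  induction N as [|N IH].
  - simpl. replace (0 + 2) with (1 + 1) by ring. replace (/ (0 + 1)) with 1 by field.
    left; apply Hln; lra.
  - rewrite tech5, !S_INR. pose proof (pos_INR N).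
    replace (INR N + 1 + 2) with ((INR N + 2) * (1 + / (INR N + 2))) by (field; lra).
    assert (Hinv : 0 < / (INR N + 2)) by (apply Rinv_0_lt_compat; lra).
    rewrite ln_mult by lra.
    assert (ln (1 + / (INR N + 2)) < / (INR N + 2)) by (apply Hln, Hinv).
    replace (INR N + 1 + 1) with (INR N + 2) by ring. lra.
Qed.

(* With [s = 1 - 1 / (2 (N + 1))] Bernoulli gives [s^(n+1) >= 1/2] for [n <= N], so the partial
   sums dominate the harmonic sums, which grow like [ln N]. *)
Lemma tail_sum_unbounded (L : R) : exists s, 0 < s < 1 /\ L < tail_sum beta s.
Proof.
  destruct (INR_archimed 1 (exp (2 * (1 + beta) * L))) as [N HN]; [lra|].
  assert (Hharm : 2 * (1 + beta) * L < sum_f_R0 (fun n => / (INR n + 1)) N).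
  { eapply Rlt_le_trans; [|apply harmonic_ge_ln].
    rewrite <- (ln_exp (2 * (1 + beta) * L)). apply ln_increasing; [apply exp_pos | lra]. }
  assert (HSN : 1 <= INR (S N)) by (rewrite S_INR; pose proof (pos_INR N); lra).
  set (s := 1 - / (2 * INR (S N))).
  assert (Hinv : 0 < / (2 * INR (S N)) <= 1 / 2).
  { split; [apply Rinv_0_lt_compat; lra|].
    unfold Rdiv. rewrite Rmult_1_l. apply Rinv_le_contravar; lra. }
  assert (Hs : 0 < s < 1) by (unfold s; lra).
  exists s. split; [exact Hs|].
  assert (Hpow : 1 / 2 <= s ^ S N).
  { eapply Rle_trans; [|apply Bernoulli_ineq; lra].
    replace (INR (S N) * / (2 * INR (S N))) with (1 / 2) by (field; lra). lra. }
  unfold tail_sum. eapply Rlt_le_trans.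
  2: { apply sum_f_R0_le_Series; [intros; apply tail_term_ge0; lra|].
       apply ex_series_tail_term. rewrite Rabs_right; lra. }
  apply Rlt_le_trans with (sum_f_R0 (fun n => / (INR n + 1) * / (2 * (1 + beta))) N).
  { rewrite <- scal_sum. apply Rmult_lt_reg_l with (2 * (1 + beta)); [lra|].
    rewrite <- Rmult_assoc, Rinv_r by lra. lra. }
  apply sum_Rle. intros n Hn. unfold tail_term.
  assert (s ^ S N <= s ^ S n) by (apply pow_decr_le_1; [lra | lia]).
  pose proof (pos_INR n).
  assert (INR (S n) + beta <= (1 + beta) * (INR n + 1)) by (rewrite S_INR; nra).
  rewrite <- Rinv_mult. unfold Rdiv.
  apply Rle_trans with (1 / 2 * / ((1 + beta) * (INR n + 1))).
  { right. field. lra. }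
  apply Rmult_le_compat; [lra | left; apply Rinv_0_lt_compat; nra | lra |].
  apply Rinv_le_contravar; [pose proof (shifted_index_ge_1 n); lra | lra].
Qed.

Lemma rho1_eq_unique_root : exists! rho1 : R, 0 < rho1 < 1 /\ rho1_eq beta rho1 = 0.
Proof.
  destruct (tail_sum_unbounded (/ (2 * beta))) as [s [Hs Hbig]].
  set (h := fun x => 2 * tail_sum beta x - / beta).
  assert (Hc : forall x, 0 <= x <= s -> continuity_pt h x).
  { intros x Hx. apply continuity_pt_minus; [|apply continuity_pt_const; intros ? ?; reflexivity].
    apply continuity_pt_scal, continuity_pt_tail_sum. rewrite Rabs_right; lra. }
  assert (Hh0 : h 0 < 0)
    by (unfold h; rewrite tail_sum_0; pose proof (Rinv_0_lt_compat beta beta_gt0); lra).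
  assert (Hhs : 0 < h s) by (unfold h; rewrite Rinv_mult in Hbig; lra).
  destruct (Ranalysis5.IVT_interv h 0 s Hc ltac:(lra) Hh0 Hhs) as [z [Hz Hhz]].
  assert (z <> 0) by (intros ->; lra).
  exists z. split.
  - split; [lra|]. rewrite rho1_eq_tail_sum. unfold h in Hhz. lra.
  - intros z' [Hz' Hroot]. rewrite rho1_eq_tail_sum in Hroot. unfold h in Hhz.
    destruct (Rtotal_order z z') as [Hlt|[Heq|Hgt]]; [|exact Heq|].
    + pose proof (tail_sum_lt z z'). lra.
    + pose proof (tail_sum_lt z' z). lra.
Qed.

Lemma rho1_eq_root_tail_sum (rho1 : R) : rho1_eq beta rho1 = 0 -> tail_sum beta rho1 = / (2 * beta).
Proof. rewrite rho1_eq_tail_sum, Rinv_mult. lra. Qed.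
End TailSum.

Fixpoint csum (f : nat -> C) (n : nat) : C :=
  match n with O => RtoC 0 | S m => (csum f m + f m)%C end.

Fixpoint rsum (f : nat -> R) (n : nat) : R :=
  match n with O => 0 | S m => rsum f m + f m end.

Lemma csum_ext (f g : nat -> C) (n : nat) :
  (forall j, (j < n)%nat -> f j = g j) -> csum f n = csum g n.
Proof.
  induction n as [|n IH]; intros H; simpl; [reflexivity|].
  rewrite IH by (intros; apply H; lia). rewrite H by lia. reflexivity.
Qed.

Lemma csum_plus (f g : nat -> C) (n : nat) :
  csum (fun j => f j + g j)%C n = (csum f n + csum g n)%C.
Proof. induction n as [|n IH]; simpl; [|rewrite IH]; ring. Qed.

Lemma csum_mult_l (c : C) (f : nat -> C) (n : nat) :
  csum (fun j => c * f j)%C n = (c * csum f n)%C.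
Proof. induction n as [|n IH]; simpl; [|rewrite IH]; ring. Qed.

Lemma csum_const (c : C) (n : nat) : csum (fun _ => c) n = (INR n * c)%C.
Proof.
  induction n as [|n IH]; simpl csum; [simpl; ring|].
  rewrite IH, S_INR, RtoC_plus. ring.
Qed.

Lemma csum_swap (F : nat -> nat -> C) (N K : nat) :
  csum (fun j => csum (F j) K) N = csum (fun k => csum (fun j => F j k) N) K.
Proof.
  induction N as [|N IH]; simpl.
  - rewrite (csum_const (RtoC 0) K). ring.
  - rewrite IH, <- csum_plus. reflexivity.
Qed.

Lemma csum_delta (f : nat -> C) (n k0 : nat) : (k0 < n)%nat ->
  (forall k, (k < n)%nat -> k <> k0 -> f k = RtoC 0) -> csum f n = f k0.
Proof.
  induction n as [|n IH]; intros Hk H; [lia|]. simpl.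
  destruct (Nat.eq_dec k0 n) as [->|Hne].
  - rewrite (csum_ext f (fun _ => RtoC 0)), csum_const by (intros; apply H; lia). ring.
  - rewrite IH, (H n) by (lia || (intros; apply H; lia)). ring.
Qed.

Lemma csum_sum_n (f : nat -> C) (m : nat) : csum f (S m) = sum_n f m.
Proof.
  induction m as [|m IH].
  - rewrite sum_O. simpl. ring.
  - rewrite sum_Sn, <- IH. reflexivity.
Qed.

Lemma csum_geom (z : C) (n : nat) : (csum (Cpow z) n * (z - 1))%C = (z ^ n - 1)%C.
Proof.
  induction n as [|n IH]; simpl csum; [simpl; ring|].
  rewrite Cmult_plus_distr_r, IH. simpl. ring.
Qed.

Lemma csum_Re (f : nat -> C) (n : nat) : Re (csum f n) = rsum (fun j => Re (f j)) n.
Proof. induction n as [|n IH]; [reflexivity|]. simpl rsum. rewrite <- IH. reflexivity. Qed.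

Lemma csum_Im (f : nat -> C) (n : nat) : Im (csum f n) = rsum (fun j => Im (f j)) n.
Proof. induction n as [|n IH]; [reflexivity|]. simpl rsum. rewrite <- IH. reflexivity. Qed.

Lemma rsum_ext (f g : nat -> R) (n : nat) :
  (forall j, (j < n)%nat -> f j = g j) -> rsum f n = rsum g n.
Proof.
  induction n as [|n IH]; intros H; simpl; [reflexivity|].
  rewrite IH by (intros; apply H; lia). rewrite H by lia. reflexivity.
Qed.

Lemma rsum_plus (f g : nat -> R) (n : nat) : rsum (fun j => f j + g j) n = rsum f n + rsum g n.
Proof. induction n as [|n IH]; simpl; [|rewrite IH]; ring. Qed.

Lemma rsum_mult_l (c : R) (f : nat -> R) (n : nat) : rsum (fun j => c * f j) n = c * rsum f n.
Proof. induction n as [|n IH]; simpl; [|rewrite IH]; ring. Qed.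

Lemma rsum_const (c : R) (n : nat) : rsum (fun _ => c) n = INR n * c.
Proof. induction n as [|n IH]; simpl rsum; [simpl; ring|]. rewrite IH, S_INR. ring. Qed.

Lemma rsum_le (f g : nat -> R) (n : nat) :
  (forall j, (j < n)%nat -> f j <= g j) -> rsum f n <= rsum g n.
Proof.
  induction n as [|n IH]; intros H; simpl; [lra|].
  assert (rsum f n <= rsum g n) by (apply IH; intros; apply H; lia).
  assert (f n <= g n) by (apply H; lia). lra.
Qed.

Lemma rsum_nonneg (f : nat -> R) (n : nat) : (forall j, (j < n)%nat -> 0 <= f j) -> 0 <= rsum f n.
Proof. intros H. rewrite <- (Rmult_0_r (INR n)), <- rsum_const. now apply rsum_le. Qed.

Definition cis (x : R) : C := (cos x, sin x).

Lemma cis_add (x y : R) : cis (x + y) = (cis x * cis y)%C.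
Proof. unfold cis, Cmult; simpl. rewrite cos_plus, sin_plus. f_equal; ring. Qed.

Lemma cis_0 : cis 0 = RtoC 1.
Proof. unfold cis. rewrite cos_0, sin_0. reflexivity. Qed.

Lemma cis_pow (x : R) (j : nat) : (cis x ^ j)%C = cis (INR j * x).
Proof.
  induction j as [|j IH]; [simpl; now rewrite Rmult_0_l, cis_0|].
  rewrite Cpow_S, IH, <- cis_add, S_INR. f_equal. ring.
Qed.

Lemma Cmod_cis (x : R) : Cmod (cis x) = 1.
Proof.
  unfold Cmod, cis; simpl. rewrite !Rmult_1_r, Rplus_comm.
  pose proof (sin2_cos2 x) as H. unfold Rsqr in H. now rewrite H, sqrt_1.
Qed.

Lemma Cconj_cis (x : R) : Cconj (cis x) = cis (- x).
Proof. unfold Cconj, cis; simpl. now rewrite cos_neg, sin_neg. Qed.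

Lemma cis_2PI_mult (k : nat) : cis (2 * PI * INR k) = RtoC 1.
Proof.
  unfold cis. replace (2 * PI * INR k) with (0 + 2 * INR k * PI) by ring.
  now rewrite cos_period, sin_period, cos_0, sin_0.
Qed.

Lemma cis_ne_1 (x : R) : 0 < Rabs x < 2 * PI -> cis x <> RtoC 1.
Proof.
  intros Hx Heq. apply (f_equal fst) in Heq. simpl in Heq.
  assert (Hs : 0 < sin (Rabs x / 2)) by (apply sin_gt_0; lra).
  assert (Hc : cos (Rabs x) = 1).
  { destruct (Rcase_abs x); [rewrite Rabs_left, cos_neg | rewrite Rabs_right]; lra. }
  replace (Rabs x) with (2 * (Rabs x / 2)) in Hc by field.
  rewrite cos_2a_sin in Hc. nra.
Qed.

Definition root_angle (N : nat) : R := 2 * PI / INR N.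

Lemma cis_2PI_diff (t m : nat) : cis (2 * PI * (INR t - INR m)) = RtoC 1.
Proof.
  destruct (Nat.le_gt_cases m t).
  - rewrite <- minus_INR by exact H. apply cis_2PI_mult.
  - replace (2 * PI * (INR t - INR m)) with (- (2 * PI * INR (m - t)))
      by (rewrite minus_INR by lia; ring).
    rewrite <- Cconj_cis, cis_2PI_mult. apply injective_projections; simpl; ring.
Qed.

Lemma csum_cis_roots (N t m : nat) : (t < N)%nat -> (m < N)%nat ->
  csum (fun j => cis (INR j * root_angle N * (INR t - INR m))) N =
  if Nat.eq_dec t m then RtoC (INR N) else RtoC 0.
Proof.
  intros Ht Hm. assert (HN : 0 < INR N) by (apply lt_0_INR; lia).
  destruct (Nat.eq_dec t m) as [<-|Hne].
  - rewrite (csum_ext _ (fun _ => RtoC 1)), csum_const by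
      (intros; rewrite <- cis_0; f_equal; ring). ring.
  - set (z := cis (root_angle N * (INR t - INR m))).
    rewrite (csum_ext _ (Cpow z)) by (intros; unfold z; rewrite cis_pow; f_equal; ring).
    assert (HzN : (z ^ N)%C = RtoC 1).
    { unfold z. rewrite cis_pow, <- (cis_2PI_diff t m). f_equal. unfold root_angle. field. lra. }
    assert (Hz1 : (z - 1)%C <> RtoC 0).
    { intros Heq. apply (cis_ne_1 (root_angle N * (INR t - INR m))).
      - assert (Hd : 1 <= Rabs (INR t - INR m) < INR N).
        { destruct (Nat.le_gt_cases m t) as [Hmt|Htm].
          + rewrite <- minus_INR, Rabs_right by (lia || apply Rle_ge, pos_INR).
            split; [apply (le_INR 1) | apply lt_INR]; lia.
          + rewrite Rabs_minus_sym, <- minus_INR, Rabs_right by (lia || apply Rle_ge, pos_INR).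
            split; [apply (le_INR 1) | apply lt_INR]; lia. }
        unfold root_angle. rewrite Rabs_mult, (Rabs_right (2 * PI / INR N))
          by (apply Rle_ge, Rdiv_le_0_compat; pose proof PI_RGT_0; lra).
        pose proof PI_RGT_0. split.
        + apply Rmult_lt_0_compat; [apply Rdiv_lt_0_compat|]; lra.
        + apply Rlt_le_trans with (2 * PI / INR N * INR N); [apply Rmult_lt_compat_l|];
            [apply Rdiv_lt_0_compat; lra | lra | right; field; lra].
      - fold z. replace z with ((z - 1) + 1)%C by ring. rewrite Heq. ring. }
    assert (Hgeom := csum_geom z N). rewrite HzN in Hgeom.
    replace (csum (Cpow z) N) with (csum (Cpow z) N * (z - 1) / (z - 1))%C by (field; exact Hz1).
    rewrite Hgeom. replace (RtoC 1 - RtoC 1)%C with (RtoC 0) by ring. field. exact Hz1.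
Qed.

Section UnitVectorsMeanZero.
Variables (N : nat) (e : nat -> C).
Hypothesis Cmod_e : forall j, Cmod (e j) = 1.
Hypothesis csum_e : csum e N = RtoC 0.

Let rsum_Re_e : rsum (fun j => Re (e j)) N = 0.
Proof. rewrite <- csum_Re, csum_e. reflexivity. Qed.

Let rsum_Im_e : rsum (fun j => Im (e j)) N = 0.
Proof. rewrite <- csum_Im, csum_e. reflexivity. Qed.

Let Re_Im_e (j : nat) : Re (e j) ^ 2 + Im (e j) ^ 2 = 1.
Proof. now rewrite <- Cmod2_alt, Cmod_e, pow1. Qed.

Lemma rsum_Cmod_sqr_plus (X Y : C) :
  rsum (fun j => Cmod (X + Y * e j)%C ^ 2) N = INR N * (Cmod X ^ 2 + Cmod Y ^ 2).
Proof.
  rewrite (rsum_ext _ (fun j => (Re X ^ 2 + Im X ^ 2 + (Re Y ^ 2 + Im Y ^ 2))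
     + 2 * (Re X * Re Y + Im X * Im Y) * Re (e j)
     + 2 * (Im X * Re Y - Re X * Im Y) * Im (e j))).
  - rewrite !rsum_plus, !rsum_mult_l, !rsum_const, rsum_Re_e, rsum_Im_e, !Cmod2_alt. ring.
  - intros j _. rewrite Cmod2_alt. pose proof (Re_Im_e j). unfold Re, Im in *. simpl. nra.
Qed.

(* Bessel's inequality for the orthogonal pair [1, e] of vectors of norm [sqrt N]. *)
Lemma bessel_pair (u : nat -> C) : (0 < N)%nat ->
  Cmod (csum u N) ^ 2 + Cmod (csum (fun j => u j * Cconj (e j))%C N) ^ 2
  <= INR N * rsum (fun j => Cmod (u j) ^ 2) N.
Proof.
  intros HN. assert (HNr : 0 < INR N) by (apply lt_0_INR; lia).
  set (p := fun j => Re (u j)). set (q := fun j => Im (u j)).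
  set (c := fun j => Re (e j)). set (s := fun j => Im (e j)).
  set (P1 := rsum p N). set (P2 := rsum q N).
  set (Q1 := rsum (fun j => p j * c j + q j * s j) N).
  set (Q2 := rsum (fun j => q j * c j - p j * s j) N).
  replace (Cmod (csum u N) ^ 2) with (P1 ^ 2 + P2 ^ 2)
    by (rewrite Cmod2_alt, csum_Re, csum_Im; reflexivity).
  replace (Cmod (csum (fun j => u j * Cconj (e j))%C N) ^ 2) with (Q1 ^ 2 + Q2 ^ 2)
    by (rewrite Cmod2_alt, csum_Re, csum_Im; f_equal; f_equal; apply rsum_ext;
        intros; unfold p, q, c, s, Re, Im; simpl; ring).
  set (T := rsum (fun j => p j ^ 2 + q j ^ 2) N).
  replace (rsum (fun j => Cmod (u j) ^ 2) N) with T
    by (apply rsum_ext; intros; rewrite Cmod2_alt; reflexivity).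
  (* [0 <= sum |u_j - A - B e_j|^2] for the Fourier coefficients [A], [B] of [u] along [1], [e]. *)
  set (A1 := P1 / INR N). set (A2 := P2 / INR N). set (B1 := Q1 / INR N). set (B2 := Q2 / INR N).
  assert (H0 : 0 <= rsum (fun j => (p j - A1 - (B1 * c j - B2 * s j)) ^ 2
                                 + (q j - A2 - (B1 * s j + B2 * c j)) ^ 2) N).
  { apply rsum_nonneg. intros; apply Rplus_le_le_0_compat; apply pow2_ge_0. }
  rewrite (rsum_ext _ (fun j => (p j ^ 2 + q j ^ 2) + (-2 * A1) * p j + (-2 * A2) * q j
      + (-2 * B1) * (p j * c j + q j * s j) + (-2 * B2) * (q j * c j - p j * s j)
      + (A1 ^ 2 + A2 ^ 2 + B1 ^ 2 + B2 ^ 2) + (2 * (A1 * B1 + A2 * B2)) * c j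
      + (2 * (A2 * B1 - A1 * B2)) * s j)) in H0
    by (intros j _; pose proof (Re_Im_e j); unfold c, s in *; nra).
  rewrite !rsum_plus, !rsum_mult_l, !rsum_const in H0.
  fold P1 P2 Q1 Q2 in H0. unfold c, s in H0. rewrite rsum_Re_e, rsum_Im_e in H0.
  replace T with (rsum (fun j => p j ^ 2) N + rsum (fun j => q j ^ 2) N)
    by (symmetry; apply rsum_plus).
  assert (P1 = INR N * A1) by (unfold A1; field; lra).
  assert (P2 = INR N * A2) by (unfold A2; field; lra).
  assert (Q1 = INR N * B1) by (unfold B1; field; lra).
  assert (Q2 = INR N * B2) by (unfold B2; field; lra).
  clearbody A1 A2 B1 B2. subst P1 P2 Q1 Q2. nra.
Qed.
End UnitVectorsMeanZero.

Definition cpoly (b : nat -> C) (K : nat) (w : C) : C := csum (fun k => b k * w ^ k)%C K.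

Lemma Cpow_scale_cis (r a : R) (k : nat) : ((r * cis a) ^ k)%C = (r ^ k * cis (INR k * a))%C.
Proof. now rewrite Cpow_mult_l, <- RtoC_pow, cis_pow. Qed.

Section DiscreteFourier.
Variables (b : nat -> C) (r : R) (K N : nat).

Let node (j : nat) : C := (r * cis (INR j * root_angle N))%C.
Let wave (j s : nat) : C := cis (INR j * root_angle N * INR s).

(* Sampling at the [N]-th roots of unity, [N >= s + K], isolates the coefficients of [w^s P(w)]. *)
Lemma csum_dft_cpoly (s m : nat) : (s + K <= N)%nat -> (m < N)%nat ->
  csum (fun j => wave j s * cpoly b K (node j) * Cconj (wave j m))%C N
  = csum (fun k => b k * r ^ k * (if Nat.eq_dec (s + k) m then INR N else 0))%C K.
Proof.
  intros HsK Hm.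
  rewrite (csum_ext _ (fun j => csum (fun k =>
             b k * r ^ k * cis (INR j * root_angle N * (INR (s + k) - INR m)))%C K)).
  2: { intros j _. unfold cpoly.
       transitivity (wave j s * Cconj (wave j m) * csum (fun k => b k * node j ^ k) K)%C; [ring|].
       rewrite <- csum_mult_l. apply csum_ext. intros k _. unfold node, wave.
       rewrite Cpow_scale_cis, Cconj_cis, plus_INR.
       replace (INR j * root_angle N * (INR s + INR k - INR m))
         with (INR j * root_angle N * INR s + INR k * (INR j * root_angle N)
               + - (INR j * root_angle N * INR m)) by ring.
       rewrite !cis_add. ring. }
  rewrite csum_swap. apply csum_ext. intros k Hk.
  rewrite csum_mult_l, csum_cis_roots by lia.
  destruct (Nat.eq_dec (s + k) m); reflexivity.
Qed.

Lemma csum_dft_cpoly_coef (s m : nat) : (s <= m)%nat -> (m < s + K)%nat -> (s + K <= N)%nat ->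
  csum (fun j => wave j s * cpoly b K (node j) * Cconj (wave j m))%C N
  = (INR N * (b (m - s)%nat * r ^ (m - s)))%C.
Proof.
  intros Hsm HmK HKN. rewrite csum_dft_cpoly by lia.
  rewrite (csum_delta _ K (m - s)) by
    (lia || (intros k _ Hk; destruct (Nat.eq_dec (s + k) m); [lia | ring])).
  destruct (Nat.eq_dec (s + (m - s)) m); [ring | lia].
Qed.

Lemma csum_dft_cpoly_zero (s m : nat) : (m < s)%nat -> (s + K <= N)%nat ->
  csum (fun j => wave j s * cpoly b K (node j) * Cconj (wave j m))%C N = RtoC 0.
Proof.
  intros Hms HKN. rewrite csum_dft_cpoly by lia.
  rewrite (csum_ext _ (fun _ => RtoC 0)), csum_const by
    (intros k _; destruct (Nat.eq_dec (s + k) m); [lia | ring]).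
  ring.
Qed.

Lemma Cmod_node (j : nat) : 0 <= r -> Cmod (node j) = r.
Proof. intros Hr. unfold node. rewrite Cmod_mult, Cmod_R, Cmod_cis, Rabs_right; lra. Qed.

Lemma Cmod_INR_mult (n : nat) (z : C) : Cmod (INR n * z)%C = INR n * Cmod z.
Proof. rewrite Cmod_mult, Cmod_R, Rabs_right; [reflexivity | apply Rle_ge, pos_INR]. Qed.

Let wave0 (j : nat) : wave j 0 = RtoC 1.
Proof. unfold wave. rewrite Rmult_0_r. apply cis_0. Qed.

Let conj_wave0 (j : nat) : Cconj (wave j 0) = RtoC 1.
Proof. unfold wave. rewrite Cconj_cis, Rmult_0_r, Ropp_0. apply cis_0. Qed.

Let shifted (x y : C) (n j : nat) : C := ((x + y * r ^ n * wave j n) * cpoly b K (node j))%C.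

Lemma csum_shifted_cpoly (x y : C) (n : nat) : (1 <= n)%nat -> (n < K)%nat -> (n + K <= N)%nat ->
  csum (shifted x y n) N = (INR N * (x * b 0%nat))%C.
Proof.
  intros Hn HnK HN.
  rewrite (csum_ext _ (fun j => x * (wave j 0 * cpoly b K (node j) * Cconj (wave j 0))
                   + y * r ^ n * (wave j n * cpoly b K (node j) * Cconj (wave j 0)))%C)
    by (intros j _; unfold shifted; rewrite conj_wave0, wave0; ring).
  rewrite csum_plus, !csum_mult_l, (csum_dft_cpoly_coef 0 0), (csum_dft_cpoly_zero n 0) by lia.
  simpl. ring.
Qed.

Lemma csum_shifted_cpoly_conj_wave (x y : C) (n : nat) : (n < K)%nat -> (n + K <= N)%nat ->
  csum (fun j => shifted x y n j * Cconj (wave j n))%C N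
  = (INR N * ((x * b n + y * b 0%nat) * r ^ n))%C.
Proof.
  intros HnK HN.
  rewrite (csum_ext _ (fun j => x * (wave j 0 * cpoly b K (node j) * Cconj (wave j n))
                   + y * r ^ n * (wave j n * cpoly b K (node j) * Cconj (wave j n)))%C)
    by (intros j _; unfold shifted; rewrite wave0; ring).
  rewrite csum_plus, !csum_mult_l, (csum_dft_cpoly_coef 0 n), (csum_dft_cpoly_coef n n) by lia.
  rewrite Nat.sub_0_r, Nat.sub_diag. simpl. ring.
Qed.

Lemma csum_wave (n : nat) : (1 <= n)%nat -> (n < N)%nat -> csum (fun j => wave j n) N = RtoC 0.
Proof.
  intros Hn HnN.
  rewrite (csum_ext _ (fun j => cis (INR j * root_angle N * (INR n - INR 0))))
    by (intros; unfold wave; simpl INR; f_equal; ring).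
  rewrite csum_cis_roots by lia. destruct (Nat.eq_dec n 0); [lia | reflexivity].
Qed.

(* Bessel's inequality for the samples of [(x + y w^n) P(w)], whose Fourier coefficients
   along [1] and [w^n] are [x b_0] and [(x b_n + y b_0) r^n]. *)
Lemma coef_ineq_of_cpoly_bound (x y : C) (M : R) (n : nat) :
  0 <= r -> (1 <= n)%nat -> (n < K)%nat -> (n + K <= N)%nat ->
  (forall w, Cmod w = r -> Cmod (cpoly b K w) <= M) ->
  Cmod (x * b 0%nat)%C ^ 2 + Cmod ((x * b n + y * b 0%nat) * r ^ n)%C ^ 2
  <= M ^ 2 * (Cmod x ^ 2 + Cmod (y * r ^ n)%C ^ 2).
Proof.
  intros Hr Hn HnK HN HP.
  assert (HNr : 0 < INR N) by (apply lt_0_INR; lia).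
  assert (Hwave : forall j, Cmod (wave j n) = 1) by (intros; apply Cmod_cis).
  assert (Hmean := csum_wave n Hn ltac:(lia)).
  assert (Hbessel := bessel_pair N (fun j => wave j n) Hwave Hmean (shifted x y n) ltac:(lia)).
  rewrite csum_shifted_cpoly, csum_shifted_cpoly_conj_wave, !Cmod_INR_mult in Hbessel by lia.
  assert (Hu : forall j, (j < N)%nat ->
            Cmod (shifted x y n j) ^ 2 <= M ^ 2 * Cmod (x + (y * r ^ n) * wave j n)%C ^ 2).
  { intros j _. unfold shifted. rewrite Cmod_mult, Rpow_mult_distr, Rmult_comm.
    apply Rmult_le_compat_r; [apply pow2_ge_0|].
    apply pow_incr. split; [apply Cmod_ge_0 | apply HP, Cmod_node, Hr]. }
  assert (Hsq := rsum_le _ _ N Hu).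
  rewrite rsum_mult_l, (rsum_Cmod_sqr_plus N (fun j => wave j n) Hwave Hmean) in Hsq.
  apply Rmult_le_reg_l with (INR N * INR N); [nra|].
  apply (Rmult_le_compat_l (INR N)) in Hsq; [|lra]. nra.
Qed.
End DiscreteFourier.

Definition disk_expansion (G : C -> C) (b : nat -> C) : Prop :=
  forall w, Cmod w < 1 -> is_series (fun k => (b k * w ^ k)%C) (G w).

Definition disk_bounded (G : C -> C) : Prop := forall w, Cmod w < 1 -> Cmod (G w) <= 1.

Lemma is_series_term_le_1 (t : nat -> C) (l : C) : is_series t l ->
  exists K0, forall k, (K0 <= k)%nat -> Cmod (t k) <= 1.
Proof.
  intros Ht.
  apply (filterlim_locally_ball_norm (K := C_AbsRing))
    with (eps := mkposreal (1 / 2) ltac:(lra)) in Ht.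
  destruct Ht as [N HN]. exists (S N). intros [|m] Hm; [lia|].
  assert (H1 := HN m ltac:(lia)). assert (H2 := HN (S m) ltac:(lia)).
  unfold ball_norm in H1, H2. rewrite sum_Sn in H2.
  change (Cmod (sum_n t m + t (S m) - l)%C < 1 / 2) in H2.
  change (Cmod (sum_n t m - l)%C < 1 / 2) in H1.
  replace (t (S m)) with ((sum_n t m + t (S m) - l) - (sum_n t m - l))%C by ring.
  eapply Rle_trans; [apply Cmod_triangle|]. rewrite Cmod_opp. lra.
Qed.

Lemma ex_series_Cmod_coef (G : C -> C) (b : nat -> C) (r : R) :
  disk_expansion G b -> 0 <= r < 1 -> ex_series (fun k => Cmod (b k) * r ^ k).
Proof.
  intros HG Hr.
  set (r' := (1 + r) / 2). set (q := r / r').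
  assert (Hr' : Cmod (RtoC r') < 1) by (rewrite Cmod_R, Rabs_right; unfold r'; lra).
  assert (Hq : 0 <= q < 1).
  { unfold q, r'. split; [apply Rdiv_le_0_compat; lra|].
    apply Rmult_lt_reg_r with ((1 + r) / 2); [lra|].
    unfold Rdiv. rewrite Rmult_assoc, Rinv_l; lra. }
  destruct (is_series_term_le_1 _ _ (HG _ Hr')) as [K0 HK0].
  apply (ex_series_incr_n _ K0).
  apply (@ex_series_le R_AbsRing R_CompleteNormedModule _ (fun k => q ^ K0 * q ^ k)).
  2: { apply (@ex_series_scal_l R_AbsRing R_NormedModule), ex_series_geom.
       rewrite Rabs_right; lra. }
  intros k. specialize (HK0 (K0 + k)%nat ltac:(lia)).
  rewrite Cmod_mult, Cmod_pow, Cmod_R, Rabs_right in HK0 by (unfold r'; lra).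
  rewrite <- pow_add. change norm with Rabs. rewrite Rabs_right
    by (apply Rle_ge, Rmult_le_pos; [apply Cmod_ge_0 | apply pow_le; lra]).
  replace r with (q * r') by (unfold q, r'; field; lra).
  rewrite Rpow_mult_distr.
  assert (0 <= q ^ (K0 + k)) by (apply pow_le; lra).
  replace (Cmod (b (K0 + k)%nat) * (q ^ (K0 + k) * r' ^ (K0 + k)))
    with (q ^ (K0 + k) * (Cmod (b (K0 + k)%nat) * r' ^ (K0 + k))) by ring.
  rewrite <- (Rmult_1_r (q ^ (K0 + k))) at 2. apply Rmult_le_compat_l; assumption.
Qed.

Lemma Cmod_le_Series_Cmod (t : nat -> C) (l : C) : is_series t l ->
  ex_series (fun k => Cmod (t k)) -> Cmod l <= Series (fun k => Cmod (t k)).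
Proof.
  intros Ht Habs.
  assert (Hlim : is_lim_seq (fun n => norm (sum_n t n)) (norm l))
    by (eapply filterlim_comp; [exact Ht | apply filterlim_norm]).
  refine (is_lim_seq_le _ _ _ _ _ Hlim (is_lim_seq_const _)). intros n.
  apply (Rle_trans _ (sum_n (fun k => norm (t k)) n)); [exact (norm_sum_n_m t 0 n)|].
  change (sum_n (fun k => Cmod (t k)) n <= Series (fun k => Cmod (t k))).
  rewrite sum_n_Reals. apply sum_f_R0_le_Series; [intros; apply Cmod_ge_0 | exact Habs].
Qed.

(* Taking [s = 1 / (1 - a^2)] gives the bound when [a < 1]. *)
Lemma le_1_sub_sqr_of_ineq_family (a c : R) : 0 <= a -> 0 <= c ->
  (forall s, 0 <= s -> a ^ 2 + (c * (1 + s * a ^ 2)) ^ 2 <= 1 + (s * c * a) ^ 2) -> c <= 1 - a ^ 2.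
Proof.
  intros Ha Hc H.
  assert (H0 := H 0 ltac:(lra)).
  assert (Ha1 : a ^ 2 <= 1) by nra.
  destruct (Req_dec (a ^ 2) 1) as [E1|E1].
  - assert (H1 := H 1 ltac:(lra)). rewrite E1 in H1. nra.
  - set (d := 1 - a ^ 2). assert (Hd : 0 < d) by (unfold d; lra).
    assert (H1 := H (/ d) ltac:(left; apply Rinv_0_lt_compat; lra)).
    replace (1 + / d * a ^ 2) with (/ d) in H1 by (unfold d; field; lra).
    set (s := / d) in *.
    assert (Hs : s * d = 1) by (unfold s; field; lra).
    assert (Hs0 : 0 < s) by (unfold s; apply Rinv_0_lt_compat; lra).
    assert (Hcs : (c * s) ^ 2 <= 1) by (unfold d in *; nra).
    assert (c * s <= 1) by nra.
    assert (c = c * s * d) by (rewrite Rmult_assoc, Hs; ring).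
    unfold d in *. nra.
Qed.

Section DiskExpansion.
Variables (G : C -> C) (b : nat -> C).
Hypothesis G_expansion : disk_expansion G b.

Lemma cpoly_approx (r eps : R) : 0 <= r < 1 -> 0 < eps ->
  exists K0, forall K, (K0 <= K)%nat -> forall w, Cmod w <= r -> Cmod (G w - cpoly b K w)%C <= eps.
Proof.
  intros Hr Heps.
  set (A := fun k => Cmod (b k) * r ^ k).
  assert (HA : ex_series A) by exact (ex_series_Cmod_coef G b r G_expansion Hr).
  assert (Hlim := Series_correct A HA). apply is_lim_seq_Reals in Hlim.
  destruct (Hlim eps Heps) as [K1 HK1].
  exists (S K1). intros [|K] HK w Hw; [lia|].
  set (t := fun k => (b k * w ^ k)%C).
  assert (Htail : is_series (fun k => t (S K + k)%nat) (G w - cpoly b (S K) w)%C).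
  { apply is_series_incr_n; [lia|]. simpl pred. unfold cpoly. rewrite <- csum_sum_n.
    assert (Hseries := G_expansion w ltac:(lra)).
    replace (G w) with (G w - csum t (S K) + csum t (S K))%C in Hseries by ring.
    exact Hseries. }
  assert (Hcmp : forall k, Cmod (t (S K + k)%nat) <= A (S K + k)%nat).
  { intros k. unfold t, A. rewrite Cmod_mult, Cmod_pow.
    apply Rmult_le_compat_l; [apply Cmod_ge_0|].
    apply pow_incr. split; [apply Cmod_ge_0 | exact Hw]. }
  assert (HAtail : ex_series (fun k => A (S K + k)%nat)) by (now apply (ex_series_incr_n A (S K))).
  assert (Habs : ex_series (fun k => Cmod (t (S K + k)%nat))).
  { refine (@ex_series_le R_AbsRing R_CompleteNormedModule _ _ _ HAtail). intros k.
    change norm with Rabs. rewrite Rabs_right by (apply Rle_ge, Cmod_ge_0). apply Hcmp. }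
  eapply Rle_trans; [exact (Cmod_le_Series_Cmod _ _ Htail Habs)|].
  eapply Rle_trans;
    [apply Series_le; [intros k; split; [apply Cmod_ge_0 | apply Hcmp] | exact HAtail]|].
  assert (Hsplit := Series_incr_n A (S K) ltac:(lia) HA). simpl pred in Hsplit.
  specialize (HK1 K ltac:(lia)). unfold Rdist in HK1. rewrite sum_n_Reals in HK1.
  apply Rabs_def2 in HK1. lra.
Qed.

Hypothesis G_bounded : disk_bounded G.

Lemma coef_ineq_of_disk_bounded (x y : C) (r : R) (n : nat) : (1 <= n)%nat -> 0 <= r < 1 ->
  Cmod (x * b 0%nat)%C ^ 2 + Cmod ((x * b n + y * b 0%nat) * r ^ n)%C ^ 2
  <= Cmod x ^ 2 + Cmod (y * r ^ n)%C ^ 2.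
Proof.
  intros Hn Hr.
  set (lhs := Cmod (x * b 0%nat)%C ^ 2 + Cmod ((x * b n + y * b 0%nat) * r ^ n)%C ^ 2).
  set (rhs := Cmod x ^ 2 + Cmod (y * r ^ n)%C ^ 2).
  assert (Happrox : forall eps, 0 < eps -> lhs <= (1 + eps) ^ 2 * rhs).
  { intros eps Heps.
    destruct (cpoly_approx r eps Hr Heps) as [K0 HK0].
    set (K := Nat.max K0 (S n)).
    apply (coef_ineq_of_cpoly_bound b r K (n + K)); [lra | lia | unfold K; lia | lia |].
    intros w Hw. specialize (HK0 K ltac:(unfold K; lia) w ltac:(lra)).
    assert (HGw := G_bounded w ltac:(lra)).
    replace (cpoly b K w) with (G w - (G w - cpoly b K w))%C by ring.
    eapply Rle_trans; [apply Cmod_triangle|]. rewrite Cmod_opp. lra. }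
  apply Rnot_lt_le. intros Hlt.
  destruct (continuity_pt_lt (fun e => - ((1 + e) ^ 2 * rhs)) 0 (- lhs)) as [d [Hd Hnear]].
  - apply derivable_continuous_pt. reg.
  - cbv beta. lra.
  - specialize (Hnear (d / 2) ltac:(rewrite Rminus_0_r, Rabs_right; lra)).
    specialize (Happrox (d / 2) ltac:(lra)). cbv beta in Hnear. lra.
Qed.

(* Take [x = 1] and [y = s b_n conj(b_0)] in [coef_ineq_of_disk_bounded] and let [r -> 1]. *)
Lemma wiener_ineq (n : nat) : (1 <= n)%nat -> Cmod (b n) <= 1 - Cmod (b 0%nat) ^ 2.
Proof.
  intros Hn. set (a := Cmod (b 0%nat)). set (c := Cmod (b n)).
  apply le_1_sub_sqr_of_ineq_family; [apply Cmod_ge_0 | apply Cmod_ge_0 |]. intros s Hs.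
  set (y := (s * b n * Cconj (b 0%nat))%C).
  assert (Hy : Cmod y = s * c * a)
    by (unfold y; rewrite !Cmod_mult, Cmod_conj, Cmod_R, Rabs_right; [reflexivity | lra]).
  assert (Hcoef : (1 * b n + y * b 0%nat)%C = (b n * RtoC (1 + s * a ^ 2))%C)
    by (unfold y, a; rewrite RtoC_plus, RtoC_mult, Cmod2_conj; ring).
  assert (Hpos : 0 <= 1 + s * a ^ 2) by (pose proof (pow2_ge_0 a); nra).
  set (A := a ^ 2 - 1). set (B := (c * (1 + s * a ^ 2)) ^ 2 - (s * c * a) ^ 2).
  assert (Hlim : A + B * 1 ^ (2 * n) <= 0).
  { apply (continuity_pt_le_at_1 (fun r => A + B * r ^ (2 * n)) 0).
    - apply derivable_continuous_pt. reg.
    - intros r Hr. assert (Hrn : 0 <= r ^ n) by (apply pow_le; lra).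
      assert (H := coef_ineq_of_disk_bounded 1 y r n Hn Hr).
      rewrite Hcoef, Cmult_1_l, !Cmod_mult, !Cmod_pow, Cmod_1, !Cmod_R, !Rabs_right, Hy in H
        by lra.
      fold a c in H. unfold A, B. rewrite pow1, !Rpow_mult_distr in H.
      replace (r ^ (2 * n)) with ((r ^ n) ^ 2) by (rewrite <- pow_mult; f_equal; lia). lra. }
  rewrite pow1 in Hlim. unfold A, B in Hlim. lra.
Qed.

Lemma Cmod_coef_le_1 (n : nat) : Cmod (b n) <= 1.
Proof.
  assert (H1 := wiener_ineq 1 (le_n 1)). pose proof (Cmod_ge_0 (b 1%nat)).
  pose proof (pow2_ge_0 (Cmod (b 0%nat))).
  destruct n as [|n]; [nra|]. specialize (wiener_ineq (S n) ltac:(lia)). lra.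
Qed.
End DiskExpansion.

Lemma is_series_Cgeom (q : C) : Cmod q < 1 -> is_series (Cpow q) (/ (1 - q))%C.
Proof.
  intros Hq.
  assert (Hd : (1 - q)%C <> RtoC 0).
  { intros H. replace q with (1 - (1 - q))%C in Hq by ring. rewrite H in Hq.
    replace (1 - 0)%C with (RtoC 1) in Hq by ring. rewrite Cmod_1 in Hq. lra. }
  assert (Hdm : 0 < Cmod (1 - q)%C) by (now apply Cmod_gt_0).
  apply (filterlim_locally_ball_norm (K := C_AbsRing)). intros eps.
  assert (Hlim := is_lim_seq_geom (Cmod q)
                   ltac:(rewrite Rabs_right; [lra | apply Rle_ge, Cmod_ge_0])).
  apply is_lim_seq_Reals in Hlim.
  destruct (Hlim (eps * Cmod (1 - q)%C)) as [N HN];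
    [apply Rmult_lt_0_compat; [apply cond_pos | exact Hdm]|].
  exists N. intros n Hn. unfold ball_norm.
  change (Cmod (sum_n (Cpow q) n - / (1 - q))%C < eps).
  rewrite <- csum_sum_n.
  replace (csum (Cpow q) (S n) - / (1 - q))%C with (- q ^ S n / (1 - q))%C.
  2: { assert (Hd' : (q - 1)%C <> RtoC 0)
         by (intros H; apply Hd; replace (1 - q)%C with (- (q - 1))%C by ring; rewrite H; ring).
       replace (csum (Cpow q) (S n)) with (csum (Cpow q) (S n) * (q - 1) / (q - 1))%C
         by (field; exact Hd').
       rewrite csum_geom. field. split; assumption. }
  rewrite Cmod_div, Cmod_opp, Cmod_pow by exact Hd.
  specialize (HN n Hn). unfold Rdist in HN.
  rewrite Rminus_0_r, Rabs_right in HN by (apply Rle_ge, pow_le, Cmod_ge_0).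
  assert (Cmod q ^ S n <= Cmod q ^ n).
  { simpl. pose proof (Cmod_ge_0 q). assert (0 <= Cmod q ^ n) by (apply pow_le; lra). nra. }
  apply Rmult_lt_reg_r with (Cmod (1 - q)%C); [exact Hdm|].
  unfold Rdiv. rewrite Rmult_assoc, Rinv_l; lra.
Qed.

Definition mobius (a : R) (w : C) : C := ((a - w) / (1 - a * w))%C.

Definition mobius_coef (a : R) (k : nat) : C :=
  match k with O => RtoC a | S k => RtoC (- (1 - a ^ 2) * a ^ k) end.

Section Mobius.
Variable a : R.
Hypothesis a_range : 0 <= a < 1.

Lemma Cmod_mult_a_lt_1 (w : C) : Cmod w < 1 -> Cmod (a * w)%C < 1.
Proof. intros Hw. rewrite Cmod_mult, Cmod_R, Rabs_right by lra. pose proof (Cmod_ge_0 w). nra. Qed.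

Lemma mobius_denom_neq0 (w : C) : Cmod w < 1 -> (1 - a * w)%C <> RtoC 0.
Proof.
  intros Hw H. apply (Rlt_irrefl 1). rewrite <- Cmod_1 at 1.
  replace (RtoC 1) with (a * w)%C
    by (replace (a * w)%C with (1 - (1 - a * w))%C by ring; rewrite H; ring).
  now apply Cmod_mult_a_lt_1.
Qed.

Lemma mobius_disk_expansion : disk_expansion (mobius a) (mobius_coef a).
Proof.
  intros w Hw.
  assert (Hgeom := is_series_Cgeom (a * w)%C (Cmod_mult_a_lt_1 w Hw)).
  apply (@is_series_scal_l C_AbsRing C_NormedModule (- (1 - a ^ 2) * w)%C) in Hgeom.
  change (is_series (fun k => (- (1 - a ^ 2) * w) * (a * w) ^ k)
                    ((- (1 - a ^ 2) * w) * / (1 - a * w)))%C in Hgeom.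
  replace ((- (1 - a ^ 2) * w) * / (1 - a * w))%C with (mobius a w - mobius_coef a 0 * w ^ 0)%C
    in Hgeom by (unfold mobius; simpl; field; exact (mobius_denom_neq0 w Hw)).
  apply is_series_decr_1. eapply is_series_ext; [|exact Hgeom]. intros k. unfold mobius_coef.
  cbv beta. rewrite Cpow_mult_l, Cpow_S, RtoC_mult, RtoC_opp, RtoC_minus, !RtoC_pow. simpl. ring.
Qed.

Lemma mobius_disk_bounded : disk_bounded (mobius a).
Proof.
  intros w Hw. assert (Hden := mobius_denom_neq0 w Hw).
  assert (Hp : 0 < Cmod (1 - a * w)%C) by (now apply Cmod_gt_0).
  unfold mobius. rewrite Cmod_div by exact Hden.
  apply Rmult_le_reg_r with (Cmod (1 - a * w)%C); [exact Hp|].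
  unfold Rdiv. rewrite Rmult_assoc, Rinv_l, Rmult_1_r, Rmult_1_l by lra.
  (* |a - w|^2 - |1 - a w|^2 = -(1 - a^2)(1 - |w|^2) *)
  assert (Hsq : Cmod (a - w)%C ^ 2 <= Cmod (1 - a * w)%C ^ 2).
  { rewrite !Cmod2_alt. assert (Hw2 := Cmod2_alt w).
    assert (Cmod w ^ 2 < 1) by (pose proof (Cmod_ge_0 w); nra).
    destruct w as [x y]. simpl in *.
    assert (0 <= (1 - a ^ 2) * (1 - (x ^ 2 + y ^ 2))) by (apply Rmult_le_pos; nra).
    nra. }
  pose proof (Cmod_ge_0 (a - w)%C). pose proof (Cmod_ge_0 (1 - a * w)%C). nra.
Qed.
End Mobius.

Lemma Cmod_mobius_coef_0 (a : R) : 0 <= a -> Cmod (mobius_coef a 0) = a.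
Proof. intros Ha. simpl. rewrite Cmod_R, Rabs_right; lra. Qed.

Lemma Cmod_mobius_coef_S (a : R) (k : nat) : 0 <= a < 1 ->
  Cmod (mobius_coef a (S k)) = (1 - a ^ 2) * a ^ k.
Proof.
  intros Ha. change (mobius_coef a (S k)) with (RtoC (- (1 - a ^ 2) * a ^ k)).
  assert (0 <= a ^ k) by (apply pow_le; lra). assert (0 <= 1 - a ^ 2) by nra.
  rewrite Cmod_R, Rabs_left1; [ring | nra].
Qed.

Section OmegaToDisk.
Variable g : R.
Hypothesis g_lt_1 : g < 1.

Lemma in_Omega_iff (z : C) : in_Omega g z <-> Cmod ((z - Omega_center g) * (1 - g))%C < 1.
Proof.
  unfold in_Omega, Omega_radius.
  rewrite Cmod_mult, <- RtoC_minus, Cmod_R, Rabs_right by lra.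
  split; intros H.
  - apply Rmult_lt_compat_r with (r := 1 - g) in H; [|lra]. now rewrite Rinv_l in H by lra.
  - apply Rmult_lt_reg_r with (1 - g); [lra|]. now rewrite Rinv_l by lra.
Qed.

Definition Omega_of_disk (w : C) : C := (Omega_center g + RtoC (/ (1 - g)) * w)%C.

Lemma Omega_of_disk_sub_center (w : C) :
  (Omega_of_disk w - Omega_center g)%C = (RtoC (/ (1 - g)) * w)%C.
Proof. unfold Omega_of_disk. ring. Qed.

Lemma in_Omega_of_disk (w : C) : Cmod w < 1 -> in_Omega g (Omega_of_disk w).
Proof.
  intros Hw. apply in_Omega_iff. rewrite Omega_of_disk_sub_center.
  replace (RtoC (/ (1 - g)) * w * (1 - g))%C with w; [exact Hw|].
  rewrite <- RtoC_minus, (Cmult_comm _ w), <- Cmult_assoc, <- RtoC_mult, Rinv_l by lra.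
  symmetry. apply Cmult_1_r.
Qed.

Lemma disk_bounded_of_in_B (f : C -> C) : in_B g f -> disk_bounded (fun w => f (Omega_of_disk w)).
Proof. intros Hf w Hw. apply Hf, in_Omega_of_disk, Hw. Qed.

Lemma disk_expansion_of_has_expansion (f : C -> C) (a : nat -> C) : has_expansion g f a ->
  disk_expansion (fun w => f (Omega_of_disk w)) (fun k => a k * RtoC ((/ (1 - g)) ^ k))%C.
Proof.
  intros Hf w Hw. eapply is_series_ext; [|exact (Hf _ (in_Omega_of_disk w Hw))]. intros k.
  change Cminus with (fun x y => (x - y)%C). cbv beta.
  rewrite Omega_of_disk_sub_center, Cpow_mult_l, <- RtoC_pow. apply Cmult_assoc.
Qed.

Lemma in_B_of_disk_bounded (G : C -> C) : disk_bounded G ->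
  in_B g (fun z => G ((z - Omega_center g) * (1 - g))%C).
Proof. intros HG z Hz. apply HG, in_Omega_iff, Hz. Qed.

Lemma has_expansion_of_disk_expansion (G : C -> C) (b : nat -> C) : disk_expansion G b ->
  has_expansion g (fun z => G ((z - Omega_center g) * (1 - g))%C)
    (fun k => b k * RtoC ((1 - g) ^ k))%C.
Proof.
  intros HG z Hz. eapply is_series_ext; [|exact (HG _ (proj1 (in_Omega_iff z) Hz))]. intros k.
  cbv beta. rewrite Cpow_mult_l, RtoC_pow, RtoC_minus.
  change ((b k * ((z - Omega_center g) ^ k * (1 - g) ^ k))%C
          = (b k * (1 - g) ^ k * (z - Omega_center g) ^ k)%C).
  ring.
Qed.
End OmegaToDisk.

Definition weighted_term (beta rho : R) (b : nat -> C) (n : nat) : R :=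
  Cmod (b n) * rho ^ n / (INR n + beta).

Section BohrTerm.
Variables (g beta rho : R).
Hypothesis g_lt_1 : g < 1.
Hypothesis beta_gt0 : 0 < beta.

Lemma bohr_term_weighted (a b : nat -> C) (n : nat) :
  Cmod (a n) = Cmod (b n) * (1 - g) ^ n -> bohr_term g beta rho a n = weighted_term beta rho b n.
Proof.
  intros Hab. unfold bohr_term, weighted_term. rewrite Hab.
  assert (0 < (1 - g) ^ n) by (apply pow_lt; lra). pose proof (pos_INR n).
  field. lra.
Qed.

Lemma bohr_term_disk_coef (a : nat -> C) (n : nat) :
  bohr_term g beta rho a n = weighted_term beta rho (fun k => a k * RtoC ((/ (1 - g)) ^ k))%C n.
Proof.
  apply bohr_term_weighted.
  rewrite Cmod_mult, Cmod_R, Rabs_right, Rmult_assoc, <- Rpow_mult_distr, Rinv_l, pow1 by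
    (lra || apply Rle_ge, pow_le, Rlt_le, Rinv_0_lt_compat; lra).
  ring.
Qed.

Lemma bohr_term_Omega_coef (b : nat -> C) (n : nat) :
  bohr_term g beta rho (fun k => b k * RtoC ((1 - g) ^ k))%C n = weighted_term beta rho b n.
Proof.
  apply bohr_term_weighted.
  rewrite Cmod_mult, Cmod_R, Rabs_right by (apply Rle_ge, pow_le; lra). reflexivity.
Qed.
End BohrTerm.

Section WeightedSeries.
Variables (beta rho : R).
Hypothesis beta_gt0 : 0 < beta.
Hypothesis rho_range : 0 <= rho < 1.

Lemma ex_series_weighted_term (b : nat -> C) : (forall n, Cmod (b n) <= 1) ->
  ex_series (weighted_term beta rho b).
Proof.
  intros Hb.
  apply (@ex_series_le R_AbsRing R_CompleteNormedModule _ (fun n => / beta * rho ^ n)).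
  2: { apply (@ex_series_scal_l R_AbsRing R_NormedModule), ex_series_geom.
       rewrite Rabs_right; lra. }
  intros n. change norm with Rabs. unfold weighted_term.
  pose proof (pos_INR n). pose proof (Cmod_ge_0 (b n)). specialize (Hb n).
  assert (0 <= rho ^ n) by (apply pow_le; lra).
  rewrite Rabs_right by (apply Rle_ge, Rdiv_le_0_compat; [apply Rmult_le_pos|]; lra).
  unfold Rdiv. rewrite Rmult_comm. apply Rmult_le_compat; [| nra | |nra].
  - left. apply Rinv_0_lt_compat. lra.
  - apply Rinv_le_contravar; lra.
Qed.

Lemma ex_series_mult_tail_term (c : nat -> R) : (forall k, 0 <= c k <= 1) ->
  ex_series (fun k => c k * tail_term beta rho k).
Proof.
  intros Hc.
  apply (@ex_series_le R_AbsRing R_CompleteNormedModule _ (fun k => rho ^ k)).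
  2: { apply ex_series_geom. rewrite Rabs_right; lra. }
  intros k. change norm with Rabs. specialize (Hc k).
  assert (Ht := Rabs_tail_term_le beta beta_gt0 rho k ltac:(rewrite Rabs_right; lra)).
  rewrite Rabs_mult, (Rabs_right rho), (Rabs_right (c k)) in * by lra.
  pose proof (Rabs_pos (tail_term beta rho k)). nra.
Qed.

Lemma Series_weighted_term (b : nat -> C) : (forall n, Cmod (b n) <= 1) ->
  Series (weighted_term beta rho b)
  = Cmod (b 0%nat) / beta + Series (fun k => Cmod (b (S k)) * tail_term beta rho k).
Proof.
  intros Hb. rewrite Series_incr_1 by now apply ex_series_weighted_term.
  unfold weighted_term at 1. simpl. f_equal; [field; lra|].
  apply Series_ext. intros k. unfold weighted_term, tail_term. unfold Rdiv. ring.
Qed.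

Lemma weighted_sum_le (G : C -> C) (b : nat -> C) :
  disk_expansion G b -> disk_bounded G -> tail_sum beta rho <= / (2 * beta) ->
  Series (weighted_term beta rho b) <= / beta.
Proof.
  intros HG HGb Htail.
  assert (Hb := Cmod_coef_le_1 G b HG HGb).
  set (c0 := Cmod (b 0%nat)). assert (Hc0 : 0 <= c0 <= 1) by (split; [apply Cmod_ge_0 | apply Hb]).
  assert (Hk : forall k, 0 <= Cmod (b (S k)) <= 1 - c0 ^ 2)
    by (intros k; split; [apply Cmod_ge_0 | apply (wiener_ineq G b HG HGb); lia]).
  rewrite Series_weighted_term by exact Hb. fold c0.
  assert (Hser : Series (fun k => Cmod (b (S k)) * tail_term beta rho k)
                 <= (1 - c0 ^ 2) * tail_sum beta rho).
  { unfold tail_sum. rewrite <- Series_scal_l. apply Series_le.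
    - intros k. pose proof (tail_term_ge0 beta beta_gt0 rho k (proj1 rho_range)). specialize (Hk k).
      split; [apply Rmult_le_pos|apply Rmult_le_compat_r]; lra.
    - apply ex_series_mult_tail_term. intros. nra. }
  assert (0 <= 1 - c0 ^ 2) by nra.
  assert ((1 - c0 ^ 2) * tail_sum beta rho <= (1 - c0 ^ 2) * / (2 * beta))
    by (apply Rmult_le_compat_l; assumption).
  assert (c0 / beta + (1 - c0 ^ 2) * / (2 * beta) = / beta - (1 - c0) ^ 2 / (2 * beta))
    by (field; lra).
  assert (0 <= (1 - c0) ^ 2 / (2 * beta)) by (apply Rdiv_le_0_compat; [apply pow2_ge_0 | lra]).
  lra.
Qed.

(* For the Mobius map with parameter [a] the weighted sum is
   [/ beta + (1 - a) ((1 + a) T(a) - / beta)] with [T(a) = sum_k a^k tail_term k]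
   and [T(a) -> tail_sum] as [a -> 1]. *)
Lemma mobius_weighted_sum_gt : / (2 * beta) < tail_sum beta rho ->
  exists a, 0 <= a < 1 /\ / beta < Series (weighted_term beta rho (mobius_coef a)).
Proof.
  intros Htail.
  destruct (lt_sum_f_R0_of_lt_Series (tail_term beta rho) (/ (2 * beta))) as [M HM];
    [apply ex_series_tail_term; [exact beta_gt0 | rewrite Rabs_right; lra] | exact Htail|].
  set (P := sum_f_R0 (tail_term beta rho) M) in HM.
  destruct (continuity_pt_lt_below_1 (fun a => (1 + a) * a ^ M * P) (/ beta)) as [a [Ha Hgt]].
  { apply derivable_continuous_pt. reg. }
  { rewrite pow1, Rinv_mult in *. lra. }
  exists a. split; [exact Ha|].
  assert (Hb := Cmod_coef_le_1 _ _ (mobius_disk_expansion a Ha) (mobius_disk_bounded a Ha)).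
  rewrite Series_weighted_term, Cmod_mobius_coef_0 by (exact Hb || lra).
  set (T := Series (fun k => a ^ k * tail_term beta rho k)).
  assert (HexT : ex_series (fun k => a ^ k * tail_term beta rho k)).
  { apply ex_series_mult_tail_term. intros k. split; [apply pow_le; lra|].
    rewrite <- (pow1 k). apply pow_incr. lra. }
  rewrite (Series_ext _ (fun k => (1 - a ^ 2) * (a ^ k * tail_term beta rho k)))
    by (intros k; rewrite Cmod_mobius_coef_S by exact Ha; ring).
  rewrite Series_scal_l. fold T.
  assert (HT : a ^ M * P <= T).
  { eapply Rle_trans; [|apply sum_f_R0_le_Series; [|exact HexT]].
    - unfold P. rewrite scal_sum. apply sum_Rle. intros k Hk. rewrite Rmult_comm.
      apply Rmult_le_compat_r; [apply tail_term_ge0; lra | apply pow_decr_le_1; [lra | lia]].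
    - intros k. apply Rmult_le_pos; [apply pow_le | apply tail_term_ge0]; lra. }
  assert (Hgap : / beta < (1 + a) * T) by (cbv beta in Hgt; nra).
  assert (a / beta + (1 - a ^ 2) * T - / beta = (1 - a) * ((1 + a) * T - / beta)) by (field; lra).
  assert (0 < (1 - a) * ((1 + a) * T - / beta)) by (apply Rmult_lt_0_compat; lra).
  lra.
Qed.
End WeightedSeries.

Theorem theorem2 (g beta : R) (hg0 : 0 <= g) (hg1 : g < 1) (hbeta : 0 < beta) :
  (exists! rho1 : R, 0 < rho1 < 1 /\ rho1_eq beta rho1 = 0) /\
  (forall rho1 : R, 0 < rho1 < 1 -> rho1_eq beta rho1 = 0 ->
     (forall (f : C -> C) (a : nat -> C),
        in_B g f -> has_expansion g f a ->
        forall rho : R, 0 <= rho <= rho1 ->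
          ex_series (bohr_term g beta rho a) /\
          Series (bohr_term g beta rho a) <= / beta) /\
     (forall rho : R, rho1 < rho < 1 ->
        exists (f : C -> C) (a : nat -> C),
          in_B g f /\ has_expansion g f a /\
          ex_series (bohr_term g beta rho a) /\
          Series (bohr_term g beta rho a) > / beta)).
Proof.
  split; [exact (rho1_eq_unique_root beta hbeta)|].
  intros rho1 Hrho1 Hroot. apply (rho1_eq_root_tail_sum beta) in Hroot.
  split.
  - intros f a Hf Ha rho Hrho.
    assert (HG := disk_expansion_of_has_expansion g hg1 f a Ha).
    assert (HGb := disk_bounded_of_in_B g hg1 f Hf).
    assert (Hterm := bohr_term_disk_coef g beta rho hg1 hbeta a).
    rewrite (Series_ext _ _ Hterm). split.
    + eapply ex_series_ext; [intros n; symmetry; apply Hterm|].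
      apply ex_series_weighted_term; [exact hbeta | lra | exact (Cmod_coef_le_1 _ _ HG HGb)].
    + apply (weighted_sum_le beta rho hbeta ltac:(lra) _ _ HG HGb).
      destruct (Req_dec rho rho1) as [->|Hne]; [lra|].
      pose proof (tail_sum_lt beta hbeta rho rho1). lra.
  - intros rho Hrho.
    destruct (mobius_weighted_sum_gt beta rho hbeta ltac:(lra)) as [a [Ha Hgt]].
    { rewrite <- Hroot. apply tail_sum_lt; lra. }
    exists (fun z => mobius a ((z - Omega_center g) * (1 - g)))%C,
           (fun k => mobius_coef a k * RtoC ((1 - g) ^ k))%C.
    assert (Hterm := bohr_term_Omega_coef g beta rho hg1 hbeta (mobius_coef a)).
    rewrite (Series_ext _ _ Hterm).
    split; [|split; [|split]].
    + exact (in_B_of_disk_bounded g hg1 _ (mobius_disk_bounded a Ha)).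
    + exact (has_expansion_of_disk_expansion g hg1 _ _ (mobius_disk_expansion a Ha)).
    + eapply ex_series_ext; [intros n; symmetry; apply Hterm|].
      apply ex_series_weighted_term; [exact hbeta | lra |].
      exact (Cmod_coef_le_1 _ _ (mobius_disk_expansion a Ha) (mobius_disk_bounded a Ha)).
    + exact Hgt.
Qed.
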